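(* Let $n$ be odd and let $A$ be an $n\times n$ semi-ASM. Then $A$ has a semi-ASM extension $B$ all of whose entries are nonzero.
   Context: A semi-ASM of order $n$ is an $n\times n$ matrix with entries in $\{0,1,-1\}$ all of whose row sums and column sums equal $1$. If $A$ and $B$ are semi-ASMs of order $n$ and $B$ agrees with $A$ in every position where $A$ is nonzero, then $B$ is a semi-ASM extension of $A$. *)

From mathcomp Require Import all_boot all_order all_algebra.
Set Implicit Arguments. Unset Strict Implicit. Unset Printing Implicit Defensive.
Import Order.TTheory GRing.Theory Num.Theory.
Local Open Scope ring_scope.

Definition semiASM (n : nat) (A : 'M[int]_n) : Prop :=
  (forall i j, A i j = 0 \/ A i j = 1 \/ A i j = -1) /\
  (forall i, \sum_(j < n) A i j = 1) /\
  (forall j, \sum_(i < n) A i j = 1).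

Definition semiASM_ext (n : nat) (A B : 'M[int]_n) : Prop :=
  semiASM A /\ semiASM B /\ (forall i j, A i j != 0 -> B i j = A i j).

(* Mark the zero entries of A.  Since a row of odd length with
   entries in {0, 1, -1} summing to 1 contains an even number of zeros, every
   row and column contains an even number of marked entries, i.e. the marks form
   a bipartite graph with even degrees.  Such a graph admits a signing: a matrix
   S with entries +-1 exactly on the marks and zero line sums (sign each even
   cycle alternately), and B := A + S is the required extension.
   Instead of decomposing into cycles, the signing is built by induction on
   integer multiplicities Z >= 0, asking |S| <= Z and S = Z mod 2: for odd
   entries (r, c), (r, c'), (r', c') replace these three by the single entry
   (r', c); parities of line sums are kept and the total drops by 2, and a
   signing of the reduced matrix lifts back by adding +-(rectangle matrix). *)

From mathcomp Require Import all_boot all_order all_algebra.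
From mathcomp Require Import zify.
Set Implicit Arguments.
Unset Strict Implicit.
Unset Printing Implicit Defensive.
Import Order.TTheory GRing.Theory Num.Theory.
Local Open Scope ring_scope.

Lemma sum_eq_indicator (R : pzSemiRingType) (I : finType) (a : I) :
  \sum_(i : I) (i == a)%:R = 1 :> R.
Proof. by rewrite (bigD1 a) //= eqxx big1 ?addr0 // => i /negbTE->. Qed.

Lemma exists_other_odd (I : finType) (F : I -> int) (a : I) :
  (2 %| \sum_i F i)%Z -> ~~ (2 %| F a)%Z -> exists2 b, b != a & ~~ (2 %| F b)%Z.
Proof.
move=> even_sum odd_a.
have [b /andP[] | all_even] := pickP (fun b => (b != a) && ~~ (2 %| F b)%Z).
  by exists b.
have even_rest : (2 %| \sum_(i | i != a) F i)%Z.
  by apply: rpred_sum => i ia; move: (all_even i); rewrite ia => /negbFE.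
by rewrite (bigD1 a) //= rpredDr // (negbTE odd_a) in even_sum.
Qed.

Lemma dvdz2_count_zeros (k : nat) (v : 'I_k -> int) :
  odd k -> (forall j, v j = 0 \/ v j = 1 \/ v j = -1) -> \sum_j v j = 1 ->
  (2 %| \sum_j (v j == 0)%:R)%Z.
Proof.
move=> odd_k v_sign sum_v.
have : (2 %| \sum_j ((v j == 0)%:R + v j - 1))%Z.
  by apply: rpred_sum => j _; case: (v_sign j) => [|[]] ->.
rewrite sumrB big_split /= sum_v sumr_const card_ord natz.
by set zeros := \sum_(j < k) _; lia.
Qed.

Section Signing.
Variables m n : nat.
Implicit Types Z S : 'M[int]_(m, n).

Definition zero_line_sums S :=
  (forall i, \sum_j S i j = 0) /\ (forall j, \sum_i S i j = 0).

Definition even_line_sums Z :=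
  (forall i, (2 %| \sum_j Z i j)%Z) /\ (forall j, (2 %| \sum_i Z i j)%Z).

Definition is_signing Z S :=
  zero_line_sums S /\ forall i j, `|S i j| <= Z i j /\ (2 %| Z i j - S i j)%Z.

Definition rect_mx (r r' : 'I_m) (c c' : 'I_n) : 'M[int]_(m, n) :=
  \matrix_(i, j) (((i == r)%:R - (i == r')%:R) * ((j == c)%:R - (j == c')%:R)).

(* [Z] with the corners [(r, c)], [(r, c')], [(r', c')] decreased by one and
   [(r', c)] increased by one. *)
Definition rect_reduce Z r r' c c' : 'M[int]_(m, n) :=
  \matrix_(i, j)
    (Z i j - rect_mx r r' c c' i j - 2 * ((i == r)%:R * (j == c')%:R)).

Lemma rect_mx_zero_line_sums r r' c c' : zero_line_sums (rect_mx r r' c c').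
Proof.
split=> [i|j]; under eq_bigr do rewrite mxE.
  by rewrite -mulr_sumr sumrB !sum_eq_indicator subrr mulr0.
by rewrite -mulr_suml sumrB !sum_eq_indicator subrr mul0r.
Qed.

Section RectangleReduction.
Variables (Z : 'M[int]_(m, n)) (r r' : 'I_m) (c c' : 'I_n).
Hypotheses (r'_r : r' != r) (c'_c : c' != c).
Hypothesis Z_ge0 : forall i j, 0 <= Z i j.

Let neqs := (negbTE r'_r, negbTE c'_c, eq_sym r r', eq_sym c c').

Lemma rect_mx_cases i j :
  [\/ i = r /\ (j = c \/ j = c'), i = r' /\ j = c', i = r' /\ j = c
    | rect_mx r r' c c' i j = 0 /\ (i == r)%:R * (j == c')%:R = 0 :> int].
Proof.
have [->|i_r] := eqVneq i r.
  have [->|j_c] := eqVneq j c; first by apply: Or41; split=> //; left.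
  have [->|j_c'] := eqVneq j c'; first by apply: Or41; split=> //; right.
  by apply: Or44; rewrite mxE (negbTE j_c) (negbTE j_c') /= !mulr0.
have [->|i_r'] := eqVneq i r'.
  have [->|j_c'] := eqVneq j c'; first exact: Or42.
  have [->|j_c] := eqVneq j c; first exact: Or43.
  by apply: Or44; rewrite mxE (negbTE j_c) (negbTE j_c') /= !mulr0.
by apply: Or44; rewrite mxE (negbTE i_r) (negbTE i_r') /= !mul0r.
Qed.

Lemma rect_reduce_ge0 :
  ~~ (2 %| Z r c)%Z -> ~~ (2 %| Z r c')%Z -> ~~ (2 %| Z r' c')%Z ->
  forall i j, 0 <= rect_reduce Z r r' c c' i j.
Proof.
move=> odd_rc odd_rc' odd_r'c' i j; rewrite mxE; have := Z_ge0 i j.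
case: (rect_mx_cases i j) => [[-> [->|->]]|[-> ->]|[-> ->]|[-> ->]];
  rewrite ?mxE ?eqxx ?neqs /=; lia.
Qed.

Lemma rect_reduce_row_sum i :
  \sum_j rect_reduce Z r r' c c' i j = \sum_j Z i j - 2 * (i == r)%:R.
Proof.
under eq_bigr do rewrite mxE.
rewrite !sumrB (rect_mx_zero_line_sums r r' c c').1 -!mulr_sumr.
by rewrite sum_eq_indicator mulr1 subr0.
Qed.

Lemma rect_reduce_col_sum j :
  \sum_i rect_reduce Z r r' c c' i j = \sum_i Z i j - 2 * (j == c')%:R.
Proof.
under eq_bigr do rewrite mxE.
rewrite !sumrB (rect_mx_zero_line_sums r r' c c').2 -mulr_sumr -mulr_suml.
by rewrite sum_eq_indicator mul1r subr0.
Qed.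

Lemma rect_reduce_even :
  even_line_sums Z -> even_line_sums (rect_reduce Z r r' c c').
Proof.
case=> Z_rows Z_cols; split=> [i|j];
  by rewrite (rect_reduce_row_sum, rect_reduce_col_sum) rpredB // dvdz_mulr.
Qed.

Lemma rect_reduce_total :
  \sum_i \sum_j rect_reduce Z r r' c c' i j = \sum_i \sum_j Z i j - 2.
Proof.
under eq_bigr do rewrite rect_reduce_row_sum.
by rewrite sumrB -mulr_sumr sum_eq_indicator mulr1.
Qed.

(* The sign is chosen so that the entry at [(r', c)], where the reduction
   increased [Z], shrinks in absolute value. *)
Lemma rect_reduce_lift_signing S sg :
  is_signing (rect_reduce Z r r' c c') S -> sg = 1 \/ sg = -1 ->
  0 <= sg * S r' c -> is_signing Z (S + sg *: rect_mx r r' c c').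
Proof.
move=> [[S_rows S_cols] S_bounded] sg_pm sg_S; split.
  have [R_rows R_cols] := rect_mx_zero_line_sums r r' c c'.
  split=> [i|j]; under eq_bigr do rewrite 2!mxE;
    by rewrite big_split /= -(mulr_sumr, mulr_suml) (S_rows, S_cols)
      (R_rows, R_cols) mulr0 addr0.
move=> i j; rewrite mxE [(sg *: rect_mx _ _ _ _) i j]mxE.
have := S_bounded i j; rewrite [rect_reduce _ _ _ _ _ i j]mxE.
have := Z_ge0 i j; case: sg_pm sg_S => -> sg_S.
all: case: (rect_mx_cases i j) => [[-> [->|->]]|[-> ->]|[-> ->]|[-> ->]];
  rewrite ?mxE ?eqxx ?neqs /=; lia.
Qed.

End RectangleReduction.

Lemma even_line_sums_signing Z :
  (forall i j, 0 <= Z i j) -> even_line_sums Z -> exists S, is_signing Z S.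
Proof.
have [k] := ubnP (absz (\sum_i \sum_j Z i j)).
elim: k Z => // k IH Z lt_total Z_ge0 Z_even; have [Z_rows Z_cols] := Z_even.
have [[r c] /= odd_rc | all_even] := pickP (fun p => ~~ (2 %| Z p.1 p.2)%Z);
  last first.
  exists 0; split; first by split=> ? ; rewrite big1 // => ? _; rewrite mxE.
  move=> i j; rewrite mxE subr0 normr0 Z_ge0.
  by have := all_even (i, j); rewrite /= => /negbFE.
have [c' c'_c odd_rc'] := exists_other_odd (Z_rows r) odd_rc.
have [r' r'_r odd_r'c'] := exists_other_odd (Z_cols c') odd_rc'.
pose Z' := rect_reduce Z r r' c c'.
have Z'_ge0 := rect_reduce_ge0 r'_r c'_c Z_ge0 odd_rc odd_rc' odd_r'c'.
have lt_total' : (absz (\sum_i \sum_j Z' i j)%R < k)%N.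
  have : 0 <= \sum_i \sum_j Z' i j.
    by rewrite sumr_ge0 // => i _; rewrite sumr_ge0.
  move: lt_total; rewrite rect_reduce_total; set t := \sum_i _; lia.
have Z'_even := rect_reduce_even r r' c c' Z_even.
have [S' S'_signing] := IH Z' lt_total' Z'_ge0 Z'_even.
have [sg sg_pm sg_S'] : exists2 sg : int, sg = 1 \/ sg = -1 & 0 <= sg * S' r' c.
  by have [?|?] := lerP 0 (S' r' c); [exists 1 | exists (-1)]; lia.
by exists (S' + sg *: rect_mx r r' c c'); apply: rect_reduce_lift_signing.
Qed.

End Signing.

Lemma semiASM_zero_pattern_even (n : nat) (A : 'M[int]_n) :
  odd n -> semiASM A -> even_line_sums (\matrix_(i, j) (A i j == 0)%:R).
Proof.
move=> odd_n [A_sign [A_rows A_cols]].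
split=> [i|j]; under eq_bigr do rewrite mxE.
  exact: dvdz2_count_zeros odd_n (A_sign i) (A_rows i).
exact: dvdz2_count_zeros odd_n (A_sign^~ j) (A_cols j).
Qed.

Theorem mainTheorem15 (n : nat) (A : 'M[int]_n) :
  odd n -> semiASM A ->
  exists B : 'M[int]_n, semiASM_ext A B /\ (forall i j, B i j != 0).
Proof.
move=> odd_n A_semi; have [A_sign [A_rows A_cols]] := A_semi.
have [|S [[S_rows S_cols] S_bounded]] :=
  even_line_sums_signing _ (semiASM_zero_pattern_even odd_n A_semi).
  by move=> i j; rewrite mxE.
have S_fills i j :
    A i j = 0 /\ (S i j = 1 \/ S i j = -1) \/ A i j != 0 /\ S i j = 0.
  have := S_bounded i j; rewrite mxE.
  by case: (A_sign i j) => [|[]] -> /=; lia.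
exists (\matrix_(i, j) (A i j + S i j)); split; last first.
  by move=> i j; rewrite mxE; case: (S_fills i j); lia.
split=> //; split; last first.
  by move=> i j A_ij; rewrite mxE; case: (S_fills i j); lia.
split; [|split].
- by move=> i j; rewrite mxE; case: (S_fills i j); case: (A_sign i j); lia.
- move=> i; under eq_bigr do rewrite mxE.
  by rewrite big_split /= A_rows S_rows addr0.
- move=> j; under eq_bigr do rewrite mxE.
  by rewrite big_split /= A_cols S_cols addr0.
Qed.
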